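(* If $N\le4$, then $\mathcal{SE}_2=\mathcal{SS}$: every superenergy tensor $T_{ab}\{\Omega_{[p]}\}$ of an arbitrary $p$-form $\Omega$ ($1\le p\le N$) equals the superenergy tensor of some simple form.
   Context: Lorentzian metric $g_{ab}$ of signature $(+,-,\dots,-)$ in dimension $N$ with a time orientation. Superenergy tensor of a $p$-form ($1\le p\le N$): $T_{ab}\{\Omega_{[p]}\}=\frac{(-1)^{p-1}}{(p-1)!}[\Omega_{a a_2\dots a_p}\Omega_b{}^{a_2\dots a_p}-\frac{1}{2p}(\Omega\cdot\Omega)g_{ab}]$, $\Omega\cdot\Omega$ full contraction (for an $N$-form $f\eta$ it is $\tfrac12f^2g_{ab}$). $\mathcal{SE}_2$ is the set of all such tensors for arbitrary $p$-forms; $\mathcal{SS}\subset\mathcal{SE}_2$ is the subset arising from simple $p$-forms (wedge products of $p$ linearly independent 1-forms). *)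

From HB Require Import structures.
From mathcomp Require Import all_boot all_order all_algebra all_fingroup.
From mathcomp Require Import all_classical all_reals.
Set Implicit Arguments. Unset Strict Implicit. Unset Printing Implicit Defensive.
Import Order.TTheory GRing.Theory Num.Theory.
Local Open Scope ring_scope.

Definition idx (N p : nat) := {ffun 'I_p -> 'I_N}.

Definition minkowski (R : realType) (N : nat) : 'M[R]_N :=
  \matrix_(i, j) (if i == j then (if val i == 0%N then 1 else -1) else 0).

(* A Lorentzian metric of signature (+,-,...,-) (components in some basis):
   congruent to the Minkowski metric. *)
Definition lorentzian (R : realType) (N : nat) (g : 'M[R]_N) : Prop :=
  exists P : 'M[R]_N, P \in unitmx /\ g = P^T *m minkowski R N *m P.

Definition is_pform (R : realType) (N p : nat) (Om : idx N p -> R) : Prop :=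
  forall (s : 'S_p) (i : idx N p),
    Om [ffun k => i (s k)] = (-1) ^+ (odd_perm s) * Om i.

Definition consI (N q : nat) (a : 'I_N) (i : idx N q) : idx N q.+1 :=
  [ffun k : 'I_q.+1 => match unlift ord0 k with Some k' => i k' | None => a end].

Definition fullcontr (R : realType) (N p : nat) (g : 'M[R]_N) (Om : idx N p -> R) : R :=
  \sum_(i : idx N p) \sum_(j : idx N p)
     Om i * Om j * \prod_(k < p) invmx g (i k) (j k).

(* Superenergy tensor of a p-form, p = q.+1:
   T_ab = (-1)^(p-1)/(p-1)! [ Omega_{a a2..ap} Omega_b^{a2..ap}
                              - 1/(2p) (Omega.Omega) g_ab ]. *)
Definition superenergy (R : realType) (N q : nat) (g : 'M[R]_N)
    (Om : idx N q.+1 -> R) : 'M[R]_N :=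
  \matrix_(a, b)
    ((-1) ^+ q / (q`!)%:R *
     (\sum_(i : idx N q) \sum_(j : idx N q)
         Om (consI a i) * Om (consI b j) * \prod_(k < q) invmx g (i k) (j k)
      - (2 * (q.+1)%:R)^-1 * fullcontr g Om * g a b)).

(* The wedge product omega_1 /\ ... /\ omega_p of the 1-forms given by the
   rows of W : (omega_1 ^ ... ^ omega_p)_{a_1..a_p} = det [omega_k(a_l)]. *)
Definition wedge (R : realType) (N p : nat) (W : 'M[R]_(p, N)) (i : idx N p) : R :=
  \det (\matrix_(k, l) W k (i l)).

From mathcomp Require Import all_boot all_order all_algebra all_fingroup.
From mathcomp Require Import all_classical all_reals.
From mathcomp Require Import ring lra zify.
Import Order.TTheory GRing.Theory Num.Theory.
Local Open Scope ring_scope.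
Set Implicit Arguments. Unset Strict Implicit.

(* When N <= 4 every p-form is simple except possibly a 2-form in
   dimension 4: 1-forms trivially, N-forms because they are multiples of the
   volume form, 3-forms in dimension 4 by an explicit factorisation, and
   2-forms in dimension <= 3 because their Plücker relations
   O_ac O_bd - O_ad O_bc = O_ab O_cd involve four indices, two of which must
   coincide.  For a 2-form F in dimension 4 one passes to an orthonormal frame,
   where F has electric and magnetic parts e, b.  The Maxwell tensor T{F} is
   invariant under the duality rotation F -> cos t F + sin t *F, and t can be
   chosen to make e.b = 0, which is the Plücker relation of the rotated form. *)

Notation "[o k / n ]" := (@Ordinal n k (erefl true)) (at level 0, k at level 0, n at level 0).

(* Rewrite every closed ordinal (e.g. [lift ord0 ord0], or [Ordinal Hk] after a
   case split on [k]) into the literal [[o k / n]], so that syntactically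
   different names of the same index become identical for [ring]. *)
Ltac ordnorm1 := match goal with |- context [?t] =>
  lazymatch type of t with ordinal ?n =>
    lazymatch t with @Ordinal _ _ (@erefl bool true) => fail | _ =>
     let v := eval vm_compute in (nat_of_ord t) in
     lazymatch v with context [nat_of_ord _] => fail | _ =>
     rewrite (_ : t = @Ordinal n v (erefl true)); [| by apply/val_inj] end end end end.
Ltac ordnorm := repeat ordnorm1.

Lemma det2 (R : comNzRingType) (A : 'M[R]_2) :
  \det A = A [o 0/2] [o 0/2] * A [o 1/2] [o 1/2] - A [o 0/2] [o 1/2] * A [o 1/2] [o 0/2].
Proof.
rewrite (expand_det_row _ ord0) !big_ord_recl big_ord0 /cofactor !det_mx11 !mxE /=.
by ordnorm; rewrite /bump /=; ring.
Qed.

Lemma det3 (R : comNzRingType) (A : 'M[R]_3) :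
  \det A = A [o 0/3] [o 0/3] * (A [o 1/3] [o 1/3] * A [o 2/3] [o 2/3] - A [o 1/3] [o 2/3] * A [o 2/3] [o 1/3])
         - A [o 0/3] [o 1/3] * (A [o 1/3] [o 0/3] * A [o 2/3] [o 2/3] - A [o 1/3] [o 2/3] * A [o 2/3] [o 0/3])
         + A [o 0/3] [o 2/3] * (A [o 1/3] [o 0/3] * A [o 2/3] [o 1/3] - A [o 1/3] [o 1/3] * A [o 2/3] [o 0/3]).
Proof.
rewrite (expand_det_row _ ord0) !big_ord_recl big_ord0 /cofactor !det2 !mxE /=.
by ordnorm; rewrite /bump /=; ring.
Qed.

Section Forms.
Variables (R : realType) (N p : nat).

Definition increasing (i : idx N p) : Prop :=
  forall k1 k2 : 'I_p, (k1 < k2)%N -> (i k1 < i k2)%N.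

Lemma pform_repeated_index (f : idx N p -> R) (i : idx N p) (k1 k2 : 'I_p) :
  is_pform f -> k1 != k2 -> i k1 = i k2 -> f i = 0.
Proof.
move=> hf hk hi; have := hf (tperm k1 k2) i; rewrite odd_tperm hk expr1 mulN1r.
have -> : [ffun k => i (tperm k1 k2 k)] = i.
  by apply/ffunP => k; rewrite ffunE; case: tpermP => // ->.
by move=> h; lra.
Qed.

Lemma wedge_pform (W : 'M[R]_(p, N)) : is_pform (wedge W).
Proof.
move=> s i; rewrite /wedge.
have -> : \matrix_(k, l) W k ([ffun k0 => i (s k0)] l) = col_perm s (\matrix_(k, l) W k (i l)).
  by apply/matrixP => k l; rewrite !mxE ffunE.
by rewrite col_permE det_mulmx det_perm odd_permV mulrC.
Qed.

Lemma pform_eq (f h : idx N p -> R) : is_pform f -> is_pform h ->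
  (forall i, increasing i -> f i = h i) -> f = h.
Proof.
move=> hf hh hinc; apply: boolp.funext => i.
have [[k1 k2] /andP[hk /eqP hi] | inj_i] :=
  pickP (fun k : 'I_p * 'I_p => (k.1 != k.2) && (i k.1 == i k.2)).
  by rewrite (pform_repeated_index hf hk hi) (pform_repeated_index hh hk hi).
(* Otherwise [i] is injective, and sorting its values gives an increasing [j]
   with [i = j o s^-1]. *)
have {}inj_i : injective i.
  by move=> k1 k2 e; have := inj_i (k1, k2); rewrite /= e eqxx andbT => /negbFE /eqP.
pose le (a b : 'I_N) := (val a <= val b)%N.
pose t := [tuple i k | k < p].
have [s hs] : exists s : 'S_p, sort le t = [tuple tnth t (s k) | k < p].
  by apply/tuple_permP; rewrite perm_sort.
pose j : idx N p := [ffun k => i (s k)].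
have hj k : j k = nth (i k) (sort le t) k.
  by rewrite hs (nth_map k) ?size_enum_ord // nth_ord_enum tnth_map tnth_ord_tuple ffunE.
have j_incr : increasing j.
  move=> k1 k2 hk; rewrite ltn_neqAle; apply/andP; split.
    by rewrite !ffunE; apply/eqP => /val_inj /inj_i /perm_inj e; rewrite e ltnn in hk.
  rewrite !hj (set_nth_default (i k1) (i k2)) ?size_sort ?size_tuple //.
  have le_trans : transitive le by move=> x y z; apply: leq_trans.
  apply: (sorted_ltn_nth le_trans _ (sort_sorted (fun a b => leq_total _ _) t)) => //.
  - by rewrite inE size_sort size_tuple.
  - by rewrite inE size_sort size_tuple.
have -> : i = [ffun k => j ((s^-1)%g k)] by apply/ffunP => k; rewrite !ffunE permKV.
by rewrite hf hh hinc.
Qed.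

Lemma pform0 : is_pform (fun _ : idx N p => 0 : R).
Proof. by move=> s i; rewrite mulr0. Qed.

Lemma pform_neq0_increasing (f : idx N p -> R) : is_pform f -> (exists i, f i <> 0) ->
  exists2 i, increasing i & f i <> 0.
Proof.
move=> hf [i0 hi0]; apply: boolp.contrapT => hall; apply: hi0.
suff -> : f = fun _ => 0 by [].
by apply: pform_eq hf pform0 _ => i hi; apply: boolp.contrapT => hfi; apply: hall; exists i.
Qed.
End Forms.

Lemma increasing_ge (n m : nat) (f : 'I_n -> 'I_m) :
  (forall k1 k2 : 'I_n, (k1 < k2)%N -> (f k1 < f k2)%N) -> forall k : 'I_n, (k <= f k)%N.
Proof.
move=> hf [k hk]; elim: k hk => // k IH hk.
exact: leq_ltn_trans (IH (ltnW hk)) (hf (Ordinal (ltnW hk)) (Ordinal hk) (ltnSn k)).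
Qed.

Lemma increasing_idx_top (n : nat) (i : idx n n) : increasing i -> i = [ffun k => k].
Proof.
move=> hi; apply/ffunP => k; rewrite ffunE; apply/val_inj/eqP.
rewrite eqn_leq (increasing_ge hi) andbT.
(* Conjugating by [rev_ord] turns the lower bound into an upper bound. *)
have hrev : forall k1 k2 : 'I_n, (k1 < k2)%N -> (rev_ord (i (rev_ord k1)) < rev_ord (i (rev_ord k2)))%N.
  move=> k1 k2 hk; have := hi (rev_ord k2) (rev_ord k1).
  have := ltn_ord (i (rev_ord k1)); have := ltn_ord k2; rewrite /=; lia.
by have := increasing_ge hrev (rev_ord k); rewrite /= rev_ordK leq_sub2lE.
Qed.

Section TwoForms.
Variables (R : realType) (N : nat).

Definition plucker (Y : 'M[R]_N) : Prop :=
  forall a b c d, Y a c * Y b d - Y a d * Y b c = Y a b * Y c d.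

Lemma antisym_entry (Y : 'M[R]_N) : Y^T = - Y -> forall i j, Y j i = - Y i j.
Proof. by move=> h i j; move/matrixP: h => /(_ i j); rewrite !mxE. Qed.

Lemma antisym_diag (Y : 'M[R]_N) : Y^T = - Y -> forall i, Y i i = 0.
Proof. by move=> h i; have := antisym_entry h i i; lra. Qed.

(* The Plücker expression is alternating, so it vanishes as soon as two of the
   four indices coincide, which is forced when [N <= 3]. *)
Lemma plucker_small_dim (Y : 'M[R]_N) : (N <= 3)%N -> Y^T = - Y -> plucker Y.
Proof.
move=> hN hY a b c d; have Yji := antisym_entry hY; have Yii := antisym_diag hY.
have [->|ab] := eqVneq a b; first by rewrite Yii; ring.
have [->|ac] := eqVneq a c; first by rewrite Yii (Yji c b); ring.
have [->|ad] := eqVneq a d; first by rewrite Yii (Yji d b) (Yji d c); ring.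
have [->|bc] := eqVneq b c; first by rewrite Yii; ring.
have [->|bd] := eqVneq b d; first by rewrite Yii (Yji d c); ring.
have [->|cd] := eqVneq c d; first by rewrite Yii; ring.
have neq_val (x y : 'I_N) : x != y -> nat_of_ord x <> nat_of_ord y by move=> /eqP + /val_inj.
move: (neq_val _ _ ab) (neq_val _ _ ac) (neq_val _ _ ad) (neq_val _ _ bc).
move: (neq_val _ _ bd) (neq_val _ _ cd) (ltn_ord a) (ltn_ord b) (ltn_ord c) (ltn_ord d).
lia.
Qed.

Definition J2 : 'M[R]_2 := \matrix_(i, j)
  (if (val i == 0%N) && (val j == 1%N) then 1 else if (val i == 1%N) && (val j == 0%N) then -1 else 0).

Lemma sum_delta (F : 'I_N -> R) (b : 'I_N) : \sum_l F l * (l == b)%:R = F b.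
Proof. by rewrite (bigD1 b) //= eqxx mulr1 big1 ?addr0 // => l /negbTE ->; rewrite mulr0. Qed.

(* The rows are Y_a./Y_ab and Y_b., and the Plücker relations say exactly that
   Y_cd is the 2x2 minor of these two rows in columns c, d. *)
Lemma plucker_factor (Y : 'M[R]_N) (a b : 'I_N) : Y a b != 0 -> Y^T = - Y -> plucker Y ->
  exists W : 'M[R]_(2, N), row_free W /\ W^T *m J2 *m W = Y.
Proof.
move=> Yab hY hp; have Yji := antisym_entry hY; have Yii := antisym_diag hY.
pose W : 'M[R]_(2, N) := \matrix_(k, l) if val k == 0%N then Y a l / Y a b else Y b l.
exists W; split.
  apply/row_freeP.
  exists (\matrix_(l, k) if val k == 0%N then (l == b)%:R else (l == a)%:R / Y b a).
  have Yba : Y b a != 0 by rewrite Yji oppr_eq0.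
  apply/matrixP => k k'; rewrite !mxE.
  case: k => [[|[|//]] Hk]; case: k' => [[|[|//]] Hk'] /=.
  - by under eq_bigr do rewrite !mxE /=; rewrite sum_delta divff.
  - by under eq_bigr do rewrite !mxE /= mulrA; rewrite -big_distrl /= sum_delta Yii !mul0r.
  - by under eq_bigr do rewrite !mxE /=; rewrite sum_delta Yii.
  - by under eq_bigr do rewrite !mxE /= mulrA; rewrite -big_distrl /= sum_delta mulfV.
apply/matrixP => c d; rewrite !mxE !big_ord_recl !big_ord0 !mxE !big_ord_recl !big_ord0 !mxE /=.
by rewrite -[Y c d](mulKf Yab) -hp; field.
Qed.

Definition pair (a b : 'I_N) : idx N 2 := [ffun k : 'I_2 => if k == ord0 then a else b].

Definition form_mx (f : idx N 2 -> R) : 'M[R]_N := \matrix_(a, b) f (pair a b).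

(* The superenergy of a 2-form with component matrix [M]; [G] stands for the
   inverse metric, kept as a separate argument so that frames can be changed. *)
Definition se_mx (g G M : 'M[R]_N) : 'M[R]_N :=
  ((2 * 2%:R)^-1 * \tr (M *m G *m M^T *m G^T)) *: g - M *m G *m M^T.

Lemma sum_idx1 (F : idx N 1 -> R) : \sum_i F i = \sum_c F [ffun _ => c].
Proof.
rewrite (reindex (fun c : 'I_N => [ffun _ : 'I_1 => c])) //.
exists (fun i : idx N 1 => i ord0) => [c _|i _]; first by rewrite ffunE.
by apply/ffunP => k; rewrite ffunE (ord1 k).
Qed.

Lemma pair_eta (i : idx N 2) : i = pair (i ord0) (i [o 1/2]).
Proof.
apply/ffunP => k; rewrite ffunE.
by case: k => [[|[|//]]] Hk /=; congr (i _); apply/val_inj.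
Qed.

Lemma sum_idx2 (F : idx N 2 -> R) : \sum_i F i = \sum_a \sum_b F (pair a b).
Proof.
rewrite pair_bigA /= (reindex (fun ab : 'I_N * 'I_N => pair ab.1 ab.2)) //.
exists (fun i : idx N 2 => (i ord0, i [o 1/2])) => [[a b] _|i _] /=; last by rewrite -pair_eta.
by rewrite !ffunE.
Qed.

Lemma consI_pair a c : consI a [ffun _ : 'I_1 => c] = pair a c.
Proof.
apply/ffunP => k; rewrite !ffunE; case: k => [[|[|//]]] Hk /=.
  by rewrite (_ : Ordinal Hk = ord0) ?unlift_none //; apply/val_inj.
by rewrite (_ : Ordinal Hk = lift ord0 ord0) ?liftK ?ffunE //; apply/val_inj.
Qed.

Lemma superenergy_2form (g : 'M[R]_N) (f : idx N 2 -> R) :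
  superenergy g f = se_mx g (invmx g) (form_mx f).
Proof.
apply/matrixP => a b; rewrite !mxE sum_idx1; under eq_bigr do rewrite sum_idx1.
rewrite /fullcontr sum_idx2.
have -> : \sum_i \sum_c f (consI (q:=1) a [ffun=> i]) * f (consI (q:=1) b [ffun=> c]) *
         \prod_(k < 1) invmx g ([ffun=> i] k) ([ffun=> c] k) =
     \sum_j (form_mx f *m invmx g) a j * (form_mx f)^T j b.
  under eq_bigr do under eq_bigr do rewrite !consI_pair big_ord1 !ffunE.
  rewrite exchange_big; apply eq_bigr => j _; rewrite !mxE big_distrl /=.
  by apply eq_bigr => k _; rewrite !mxE; ring.
have -> : \sum_a0 \sum_b0 \sum_j f (pair a0 b0) * f j * \prod_(k < 2) invmx g (pair a0 b0 k) (j k)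
   = \tr (form_mx f *m invmx g *m (form_mx f)^T *m (invmx g)^T).
  under eq_bigr do under eq_bigr do rewrite sum_idx2.
  rewrite /mxtrace; apply eq_bigr => x _; rewrite mxE.
  under [RHS]eq_bigr do rewrite !mxE big_distrl /=.
  under [RHS]eq_bigr do under eq_bigr do rewrite !mxE big_distrl big_distrl /=.
  under [RHS]eq_bigr do rewrite exchange_big /=.
  rewrite [RHS]exchange_big /=; apply eq_bigr => w _.
  apply eq_bigr => y _; apply eq_bigr => z _.
  by rewrite big_ord_recl big_ord1 !ffunE !mxE; ring.
by rewrite /= expr1 divr1; ring.
Qed.

Lemma se_mx_congr (P g G H M : 'M[R]_N) : P \in unitmx -> g *m H = 1%:M ->
  (P^T *m g *m P) *m G = 1%:M ->
  se_mx (P^T *m g *m P) G M = P^T *m se_mx g H ((invmx P)^T *m M *m invmx P) *m P.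
Proof.
move=> Pu gH hG; set Q := invmx P.
have PQ : P *m Q = 1%:M by rewrite mulmxV.
have QP : Q *m P = 1%:M by rewrite mulVmx.
have PG : P *m G *m P^T = H.
  have := congr1 (mulmx (H *m Q^T)) hG.
  rewrite mulmx1 !mulmxA -(mulmxA H) -trmx_mul PQ trmx1 mulmx1 (mulmx1C gH) mul1mx.
  by move=> ->; rewrite -mulmxA -trmx_mul PQ trmx1 mulmx1.
have PG' : P *m G^T *m P^T = H^T by rewrite -PG !trmx_mul trmxK mulmxA.
set X := Q^T *m M *m Q.
have MX : M = P^T *m X *m P.
  by rewrite /X !mulmxA -trmx_mul QP trmx1 mul1mx -mulmxA QP mulmx1.
have E1 : M *m G *m M^T = P^T *m (X *m H *m X^T) *m P.
  by rewrite {1 2}MX !trmx_mul !trmxK !mulmxA -PG !mulmxA.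
have E2 : \tr (M *m G *m M^T *m G^T) = \tr (X *m H *m X^T *m H^T).
  by rewrite E1 -!mulmxA mxtrace_mulC !mulmxA -PG' !mulmxA.
by rewrite /se_mx E2 E1 mulmxBr mulmxBl -scalemxAr -scalemxAl.
Qed.

Lemma form_mx_wedge (W : 'M[R]_(2, N)) : form_mx (wedge W) = W^T *m J2 *m W.
Proof.
apply/matrixP => c d; rewrite !mxE /wedge det2 !mxE.
rewrite !big_ord_recl !big_ord0 !mxE !big_ord_recl !big_ord0 !mxE /=.
by ordnorm; rewrite !ffunE /=; ring.
Qed.

Lemma form_mx_antisym (f : idx N 2 -> R) : is_pform f -> (form_mx f)^T = - form_mx f.
Proof.
move=> hf; apply/matrixP => a b; rewrite !mxE.
have := hf (tperm ord0 (lift ord0 ord0)) (pair a b).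
rewrite odd_tperm /= expr1 mulN1r => <-; congr f.
apply/ffunP => k; rewrite !ffunE; case: k => [[|[|//]] Hk] /=.
  by rewrite (_ : Ordinal Hk = ord0) ?tpermL //; apply/val_inj.
by rewrite (_ : Ordinal Hk = lift ord0 ord0) ?tpermR //; apply/val_inj.
Qed.

Lemma form_mx_neq0 (f : idx N 2 -> R) : (exists i, f i <> 0) -> form_mx f != 0.
Proof.
by case=> i hi; apply/eqP => /matrixP /(_ (i ord0) (i [o 1/2])); rewrite !mxE -pair_eta.
Qed.

Definition simple_superenergy (q : nat) (g : 'M[R]_N) (Om : idx N q.+1 -> R) : Prop :=
  exists W : 'M[R]_(q.+1, N), row_free W /\ superenergy g Om = superenergy g (wedge W).

Lemma simple_superenergy_wedge (q : nat) (g : 'M[R]_N) (W : 'M[R]_(q.+1, N)) :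
  row_free W -> simple_superenergy g (wedge W).
Proof. by exists W. Qed.

Lemma simple_superenergy_plucker (g : 'M[R]_N) (f : idx N 2 -> R) :
  is_pform f -> (exists i, f i <> 0) -> plucker (form_mx f) -> simple_superenergy g f.
Proof.
move=> hf hnz hp; have /matrix0Pn [a [b hab]] := form_mx_neq0 hnz.
have [W [hW WY]] := plucker_factor hab (form_mx_antisym hf) hp.
by exists W; split => //; rewrite !superenergy_2form form_mx_wedge WY.
Qed.

Lemma simple_superenergy_2form_small (g : 'M[R]_N) (Om : idx N 2 -> R) :
  (N <= 3)%N -> is_pform Om -> (exists i, Om i <> 0) -> simple_superenergy g Om.
Proof.
move=> hN hf hnz; apply: simple_superenergy_plucker => //.
exact: plucker_small_dim hN (form_mx_antisym hf).
Qed.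
End TwoForms.

Lemma minkowski_sqr (R : realType) (N : nat) : minkowski R N *m minkowski R N = 1%:M.
Proof.
apply/matrixP => i j; rewrite !mxE (bigD1 i) //= big1 => [|k /negbTE ki]; last first.
  by rewrite !mxE eq_sym ki mul0r.
rewrite !mxE eqxx addr0; case: (i == j); last by rewrite mulr0.
by case: ifP; rewrite ?mulrNN mulr1.
Qed.

Section Faraday.
Variable R : realType.
Local Notation eta := (minkowski R 4).

Lemma sum4 (F : 'I_4 -> R) : \sum_k F k = F [o 0/4] + F [o 1/4] + F [o 2/4] + F [o 3/4].
Proof. by rewrite !big_ord_recl big_ord0 addr0 !addrA; ordnorm. Qed.

Definition faraday_entry (e1 e2 e3 b1 b2 b3 : R) (i j : nat) : R :=
  match i, j with
  | 0, 1 => e1 | 0, 2 => e2 | 0, 3 => e3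
  | 1, 0 => - e1 | 2, 0 => - e2 | 3, 0 => - e3
  | 2, 3 => b1 | 3, 2 => - b1 | 3, 1 => b2 | 1, 3 => - b2
  | 1, 2 => b3 | 2, 1 => - b3 | _, _ => 0 end.

Definition faraday e1 e2 e3 b1 b2 b3 : 'M[R]_4 :=
  \matrix_(i, j) faraday_entry e1 e2 e3 b1 b2 b3 i j.

Lemma faraday_antisym e1 e2 e3 b1 b2 b3 :
  (faraday e1 e2 e3 b1 b2 b3)^T = - faraday e1 e2 e3 b1 b2 b3.
Proof.
apply/matrixP => i j; rewrite !mxE.
by case: i => [[|[|[|[|//]]]] Hi]; case: j => [[|[|[|[|//]]]] Hj] /=; rewrite ?opprK ?oppr0.
Qed.

Lemma antisym_faraday (X : 'M[R]_4) : X^T = - X ->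
  X = faraday (X [o 0/4] [o 1/4]) (X [o 0/4] [o 2/4]) (X [o 0/4] [o 3/4])
              (X [o 2/4] [o 3/4]) (X [o 3/4] [o 1/4]) (X [o 1/4] [o 2/4]).
Proof.
move=> hX; apply/matrixP => i j; rewrite mxE.
case: i => [[|[|[|[|//]]]] Hi]; case: j => [[|[|[|[|//]]]] Hj] /=; ordnorm;
  first [done | by rewrite antisym_diag | by rewrite (antisym_entry hX)].
Qed.

Lemma faraday_plucker e1 e2 e3 b1 b2 b3 : e1 * b1 + e2 * b2 + e3 * b3 = 0 ->
  plucker (faraday e1 e2 e3 b1 b2 b3).
Proof.
move=> eb a b c d; rewrite !mxE.
case: a => [[|[|[|[|//]]]] Ha]; case: b => [[|[|[|[|//]]]] Hb];
case: c => [[|[|[|[|//]]]] Hc]; case: d => [[|[|[|[|//]]]] Hd] /=;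
  first [ring | lra].
Qed.

Definition faraday_sq e1 e2 e3 b1 b2 b3 : 'M[R]_4 := \matrix_(i, j)
  (let f := faraday_entry e1 e2 e3 b1 b2 b3 in
   f i 0%N * f j 0%N - f i 1%N * f j 1%N - f i 2%N * f j 2%N - f i 3%N * f j 3%N).

Lemma faraday_sqE e1 e2 e3 b1 b2 b3 (F := faraday e1 e2 e3 b1 b2 b3) :
  F *m eta *m F^T = faraday_sq e1 e2 e3 b1 b2 b3.
Proof. by apply/matrixP => i j; rewrite !mxE sum4 !mxE !sum4 !mxE /=; ring. Qed.

Lemma trace_faraday e1 e2 e3 b1 b2 b3 (F := faraday e1 e2 e3 b1 b2 b3) :
  \tr (F *m eta *m F^T *m eta^T) = 2 * (b1^+2 + b2^+2 + b3^+2 - e1^+2 - e2^+2 - e3^+2).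
Proof. by rewrite faraday_sqE /mxtrace sum4 !mxE !sum4 !mxE /=; ring. Qed.

(* The left side is the duality rotation a F + c *F, the dual *F having
   electric part b and magnetic part -e. *)
Lemma se_mx_duality_rotation e1 e2 e3 b1 b2 b3 a c :
  se_mx eta eta (faraday (a * e1 + c * b1) (a * e2 + c * b2) (a * e3 + c * b3)
                         (a * b1 - c * e1) (a * b2 - c * e2) (a * b3 - c * e3))
  = (a ^+ 2 + c ^+ 2) *: se_mx eta eta (faraday e1 e2 e3 b1 b2 b3).
Proof.
rewrite /se_mx !trace_faraday !faraday_sqE; apply/matrixP => i j; rewrite !mxE.
by case: i => [[|[|[|[|//]]]] Hi]; case: j => [[|[|[|[|//]]]] Hj] /=; field.
Qed.
End Faraday.

Section DualityRotation.
Variable R : realType.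
Local Notation eta := (minkowski R 4).

(* With (a, c) = (cos t, sin t), the condition reads C cos 2t = (A/2) sin 2t. *)
Lemma duality_angle (A C : R) :
  exists a c : R, a ^+ 2 + c ^+ 2 = 1 /\ (a ^+ 2 - c ^+ 2) * C - a * c * A = 0.
Proof.
have [-> | C0] := eqVneq C 0; first by exists 1, 0; split; ring.
pose rho := Num.sqrt (A ^+ 2 + 4 * C ^+ 2).
have rho2 : rho ^+ 2 = A ^+ 2 + 4 * C ^+ 2.
  by rewrite sqr_sqrtr // addr_ge0 ?sqr_ge0 // mulr_ge0 ?sqr_ge0.
pose al := A + rho; pose be := 2 * C.
have be0 : be != 0 by rewrite mulf_neq0 // pnatr_eq0.
have norm_gt0 : 0 < al ^+ 2 + be ^+ 2.
  by rewrite ltr_wpDl ?sqr_ge0 // lt_def sqrf_eq0 be0 sqr_ge0.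
pose s := Num.sqrt (al ^+ 2 + be ^+ 2).
have s2 : s ^+ 2 = al ^+ 2 + be ^+ 2 by rewrite sqr_sqrtr // ltW.
have s0 : s != 0 by rewrite -sqrf_eq0 s2 gt_eqF.
exists (al / s), (be / s); split.
  by rewrite !expr_div_n -mulrDl -s2 divff // sqrf_eq0.
have key : (al ^+ 2 - be ^+ 2) * C - al * be * A = C * (rho ^+ 2 - (A ^+ 2 + 4 * C ^+ 2)).
  by rewrite /al /be; ring.
rewrite (_ : _ - _ = ((al ^+ 2 - be ^+ 2) * C - al * be * A) / s ^+ 2); last by field.
by rewrite key rho2 subrr mulr0 mul0r.
Qed.

Lemma rotation_eq0 (a c x y : R) : a ^+ 2 + c ^+ 2 = 1 ->
  a * x + c * y = 0 -> a * y - c * x = 0 -> x = 0 /\ y = 0.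
Proof.
move=> h h1 h2.
have ex : x = a * (a * x + c * y) - c * (a * y - c * x) by rewrite -[x in LHS]mulr1 -h; ring.
have ey : y = a * (a * y - c * x) + c * (a * x + c * y) by rewrite -[y in LHS]mulr1 -h; ring.
by split; [rewrite ex | rewrite ey]; rewrite h1 h2; ring.
Qed.

Lemma se_mx_faraday_simple e1 e2 e3 b1 b2 b3 (F := faraday e1 e2 e3 b1 b2 b3) : F != 0 ->
  exists W : 'M[R]_(2, 4), row_free W /\ se_mx eta eta (W^T *m J2 R *m W) = se_mx eta eta F.
Proof.
move=> F0.
have [a [c [ac1 eb']]] := duality_angle (e1^+2 + e2^+2 + e3^+2 - (b1^+2 + b2^+2 + b3^+2))
   (e1 * b1 + e2 * b2 + e3 * b3).
pose F' := faraday (a * e1 + c * b1) (a * e2 + c * b2) (a * e3 + c * b3)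
                   (a * b1 - c * e1) (a * b2 - c * e2) (a * b3 - c * e3).
have seF' : se_mx eta eta F' = se_mx eta eta F.
  by rewrite /F' se_mx_duality_rotation ac1 scale1r.
have F'0 : F' != 0.
  apply: contraNneq F0 => /matrixP F'0; rewrite /F.
  have z i j : F' i j = 0 by rewrite F'0 mxE.
  have := z [o 0/4] [o 1/4]; have := z [o 2/4] [o 3/4]; rewrite !mxE /= => z1 z2.
  have [-> ->] := rotation_eq0 ac1 z2 z1.
  have := z [o 0/4] [o 2/4]; have := z [o 3/4] [o 1/4]; rewrite !mxE /= => z3 z4.
  have [-> ->] := rotation_eq0 ac1 z4 z3.
  have := z [o 0/4] [o 3/4]; have := z [o 1/4] [o 2/4]; rewrite !mxE /= => z5 z6.
  have [-> ->] := rotation_eq0 ac1 z6 z5.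
  by apply/eqP/matrixP => i j; rewrite !mxE; case: i => [[|[|[|[|//]]]] Hi];
     case: j => [[|[|[|[|//]]]] Hj] /=; rewrite ?oppr0.
have /matrix0Pn [i [j Fij]] := F'0.
have plF' : plucker F' by apply: faraday_plucker; rewrite -eb'; ring.
have [W [freeW WF']] := plucker_factor Fij (faraday_antisym _ _ _ _ _ _) plF'.
by exists W; rewrite WF' seF'.
Qed.

Lemma simple_superenergy_2form_dim4 (g : 'M[R]_4) (Om : idx 4 2 -> R) :
  lorentzian g -> is_pform Om -> (exists i, Om i <> 0) -> simple_superenergy g Om.
Proof.
case=> P [Pu ->] hf hnz.
have eta_u : eta \in unitmx by case: (mulmx1_unit (minkowski_sqr R 4)).
have gG : (P^T *m eta *m P) *m invmx (P^T *m eta *m P) = 1%:M.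
  by rewrite mulmxV // !unitmx_mul unitmx_tr Pu eta_u.
have se_frame M := se_mx_congr M Pu (minkowski_sqr R 4) gG.
(* [X] is the component matrix of [Om] in a frame where [g] becomes [eta]. *)
pose X := (invmx P)^T *m form_mx Om *m invmx P.
have Xa : X^T = - X.
  by rewrite /X !trmx_mul trmxK form_mx_antisym // mulNmx mulmxN mulmxA.
have X0 : X != 0.
  have OmX : form_mx Om = P^T *m X *m P.
    by rewrite /X !mulmxA -trmx_mul mulVmx // trmx1 mul1mx -mulmxA mulVmx // mulmx1.
  by apply: contraNneq (form_mx_neq0 hnz) => X0; rewrite OmX X0 mulmx0 mul0mx.
rewrite (antisym_faraday Xa) in X0.
have [W [freeW seW]] := se_mx_faraday_simple X0.
rewrite -(antisym_faraday Xa) in seW.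
exists (W *m P); split; first by rewrite /row_free mxrankMfree ?row_free_unit.
rewrite !superenergy_2form form_mx_wedge !se_frame -/X -seW; congr (_ *m se_mx _ _ _ *m _).
by rewrite !trmx_mul !mulmxA -trmx_mul mulmxV // trmx1 mul1mx -!mulmxA mulmxV // mulmx1.
Qed.
End DualityRotation.

Section SimpleForms.
Variable R : realType.

Lemma one_form_simple (N : nat) (Om : idx N 1 -> R) : (exists i, Om i <> 0) ->
  exists W : 'M[R]_(1, N), row_free W /\ Om = wedge W.
Proof.
case=> i hi; pose W : 'M[R]_(1, N) := \row_l Om [ffun _ => l].
have OmW : Om = wedge W.
  apply: boolp.funext => j; rewrite /wedge det_mx11 !mxE; congr Om.
  by apply/ffunP => k; rewrite ffunE (ord1 k).
exists W; split => //; rewrite /row_free eqn_leq rank_leq_row lt0n mxrank_eq0.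
apply/eqP => /rowP /(_ (i ord0)); rewrite !mxE => W0; apply: hi; rewrite -W0.
by congr Om; apply/ffunP => k; rewrite ffunE (ord1 k).
Qed.

Lemma top_form_simple (n : nat) (Om : idx n.+1 n.+1 -> R) :
  is_pform Om -> (exists i, Om i <> 0) ->
  exists W : 'M[R]_n.+1, row_free W /\ Om = wedge W.
Proof.
move=> hf hnz; have [i /increasing_idx_top -> D0] := pform_neq0_increasing hf hnz.
pose W : 'M[R]_n.+1 := diag_mx (\row_k (if k == ord0 then Om [ffun k => k] else 1)).
have detW : \det W = Om [ffun k => k].
  by rewrite det_diag big_ord_recl big1 => [|k _]; rewrite !mxE // mulr1.
exists W; split; first by rewrite row_free_unit unitmxE detW unitfE; apply/eqP.
apply: pform_eq hf (wedge_pform W) _ => j /increasing_idx_top ->.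
by rewrite /wedge -detW; congr (\det _); apply/matrixP => k l; rewrite !mxE ffunE.
Qed.

Definition triple (N : nat) (x y z : 'I_N) : idx N 3 :=
  [ffun k : 'I_3 => if val k == 0%N then x else if val k == 1%N then y else z].

Lemma increasing_idx_dim4 (P : idx 4 3 -> Prop) :
  P (triple [o 0/4] [o 1/4] [o 2/4]) -> P (triple [o 0/4] [o 1/4] [o 3/4]) ->
  P (triple [o 0/4] [o 2/4] [o 3/4]) -> P (triple [o 1/4] [o 2/4] [o 3/4]) ->
  forall i, increasing i -> P i.
Proof.
move=> P012 P013 P023 P123 i hi.
have -> : i = triple (i [o 0/3]) (i [o 1/3]) (i [o 2/3]).
  apply/ffunP => k; rewrite ffunE.
  by case: k => [[|[|[|//]]] Hk] /=; congr (i _); apply/val_inj.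
move: (hi [o 0/3] [o 1/3] isT) (hi [o 1/3] [o 2/3] isT).
move: (i [o 0/3]) (i [o 1/3]) (i [o 2/3]) => x y z.
case: x => [[|[|[|[|//]]]] Hx]; case: y => [[|[|[|[|//]]]] Hy];
  case: z => [[|[|[|[|//]]]] Hz] //= _ _; by ordnorm.
Qed.

(* The rows e_a + al e_d, e_b + be e_d, w e_c + ga e_d: their wedge has
   component w on (a, b, c), and al, be, ga adjust the three components
   involving d. *)
Definition rows3 (a b c d : nat) (al be ga w : R) : 'M[R]_(3, 4) := \matrix_(k, l)
  match val k with
  | 0 => (val l == a)%:R + al * (val l == d)%:R
  | 1 => (val l == b)%:R + be * (val l == d)%:R
  | _ => w * (val l == c)%:R + ga * (val l == d)%:R end.

Definition rows3_inv (a b c : nat) (w : R) : 'M[R]_(4, 3) := \matrix_(l, k)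
  match val k with
  | 0 => (val l == a)%:R | 1 => (val l == b)%:R | _ => (val l == c)%:R / w end.

Local Ltac rows3_solve Winv OmE :=
  split; [ apply/row_freeP; exists Winv; apply/matrixP;
           by case=> [[|[|[|//]]] ?]; case=> [[|[|[|//]]] ?]; rewrite !mxE sum4 !mxE /=; field
         | by apply: OmE; rewrite /wedge det3 !mxE !ffunE /=; field ].

Lemma three_form_dim4_simple (Om : idx 4 3 -> R) : is_pform Om -> (exists i, Om i <> 0) ->
  exists W : 'M[R]_(3, 4), row_free W /\ Om = wedge W.
Proof.
move=> hf hnz.
set D := Om (triple [o 0/4] [o 1/4] [o 2/4]); set C := Om (triple [o 0/4] [o 1/4] [o 3/4]).
set B := Om (triple [o 0/4] [o 2/4] [o 3/4]); set A := Om (triple [o 1/4] [o 2/4] [o 3/4]).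
have OmE (W : 'M[R]_(3, 4)) :
   wedge W (triple [o 0/4] [o 1/4] [o 2/4]) = D -> wedge W (triple [o 0/4] [o 1/4] [o 3/4]) = C ->
   wedge W (triple [o 0/4] [o 2/4] [o 3/4]) = B -> wedge W (triple [o 1/4] [o 2/4] [o 3/4]) = A ->
   Om = wedge W.
  move=> h012 h013 h023 h123; apply: pform_eq hf (wedge_pform W) _ => i.
  exact: (increasing_idx_dim4 (P := fun i => Om i = wedge W i)).
have [i hi] := pform_neq0_increasing hf hnz.
pattern i; apply: (increasing_idx_dim4 _ _ _ _ hi); move=> /eqP Om0.
- exists (rows3 0 1 2 3 (A / D) (- B / D) C D); rows3_solve (rows3_inv 0 1 2 D) OmE.
- exists (rows3 0 1 3 2 (- A / C) (B / C) D C); rows3_solve (rows3_inv 0 1 3 C) OmE.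
- exists (rows3 0 2 3 1 (A / B) (C / B) (- D) B); rows3_solve (rows3_inv 0 2 3 B) OmE.
- exists (rows3 1 2 3 0 (B / A) (- C / A) D A); rows3_solve (rows3_inv 1 2 3 A) OmE.
Qed.
End SimpleForms.

Unset Implicit Arguments.
Set Strict Implicit.

Theorem mainTheorem19 (R : realType) (N : nat) (g : 'M[R]_N) (q : nat)
    (Om : idx N q.+1 -> R) :
  (N <= 4)%N -> lorentzian g -> (q.+1 <= N)%N ->
  is_pform Om -> (exists i, Om i <> 0) ->
  exists (r : nat) (W : 'M[R]_(r.+1, N)),
    [/\ (r.+1 <= N)%N, row_free W & superenergy g Om = superenergy g (wedge W)].
Proof.
move=> hN hg hq hf hnz.
suff [W [freeW seW]] : simple_superenergy g Om by exists q, W.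
have [eqN | hlt] : q.+1 = N \/ (q.+1 < N)%N by lia.
  subst N; have [W [freeW ->]] := top_form_simple hf hnz.
  exact: simple_superenergy_wedge.
case: q Om hf hnz hlt {hq} => [|[|[|q]]] Om hf hnz hlt.
- have [W [freeW ->]] := one_form_simple hnz; exact: simple_superenergy_wedge.
- have [hN3 | eN] : (N <= 3)%N \/ N = 4 by lia.
    exact: simple_superenergy_2form_small.
  by subst N; apply: simple_superenergy_2form_dim4.
- have eN : N = 4 by lia.
  subst N; have [W [freeW ->]] := three_form_dim4_simple hf hnz.
  exact: simple_superenergy_wedge.
- by lia.
Qed.
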